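(* Let $X$ be a paracompact $\sigma$-space and let $(\lambda_i)_{i\ge1}$ be a sequence of open locally finite covers of $X$ with $\lambda_{i+1}\succ\lambda_i$ for all $i$. Then there exist a sequence $(\omega_i^\circ)_{i\ge1}$ of open locally finite covers of $X$ with $\omega_i^\circ\succ\lambda_i$ and $\omega^\circ_{i+1}\succ\omega^\circ_i$ for all $i$, a metric space $Z$, and a continuous bijection $\psi\colon X\to Z$ such that $\psi(\omega_i^\circ)=\{\psi(G):G\in\omega_i^\circ\}$ is an open locally finite cover of $Z$ for every $i$.
   Context: A $\sigma$-space is a regular $T_1$ space with a $\sigma$-discrete network (a network being a family $\mu$ such that for every $x$ and neighborhood $Ox$ there is $F\in\mu$ with $x\in F\subseteq Ox$). For covers $\omega,\lambda$, $\omega\succ\lambda$ means $\omega$ refines $\lambda$. *)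

From HB Require Import structures.
From mathcomp Require Import all_boot all_order all_algebra.
From mathcomp Require Import all_classical all_reals all_analysis.
From mathcomp Require Import Rstruct Rstruct_topology.

Set Implicit Arguments.
Unset Strict Implicit.
Unset Printing Implicit Defensive.

Local Open Scope classical_set_scope.

Section covers.
Context {T : topologicalType}.

Definition is_cover (F : set (set T)) : Prop := \bigcup_(G in F) G = setT.

Definition open_family (F : set (set T)) : Prop := forall G, F G -> open G.

Definition locally_finite_family (F : set (set T)) : Prop :=
  forall x : T, exists N, nbhs x N /\ finite_set [set G | F G /\ G `&` N !=set0].

Definition discrete_family (F : set (set T)) : Prop :=
  forall x : T, exists N, nbhs x N /\
    forall G1 G2, F G1 -> F G2 -> G1 `&` N !=set0 -> G2 `&` N !=set0 -> G1 = G2.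

Definition open_lf_cover (F : set (set T)) : Prop :=
  [/\ is_cover F, open_family F & locally_finite_family F].

Definition network (mu : set (set T)) : Prop :=
  forall (x : T) (U : set T), open U -> U x -> exists2 F, mu F & F x /\ F `<=` U.

Definition has_sigma_discrete_network : Prop :=
  exists mu : nat -> set (set T),
    (forall n, discrete_family (mu n)) /\ network (\bigcup_n mu n).

End covers.

(* omega \succ lambda : omega refines lambda *)
Definition refines {T : Type} (omega lambda : set (set T)) : Prop :=
  forall G, omega G -> exists2 L, lambda L & G `<=` L.

Definition sigma_space (T : topologicalType) : Prop :=
  [/\ regular_space T, accessible_space T & @has_sigma_discrete_network T].

Definition paracompact (T : topologicalType) : Prop :=
  forall lambda : set (set T), is_cover lambda -> open_family lambda ->
    exists2 omega : set (set T), open_lf_cover omega & refines omega lambda.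

From HB Require Import structures.
From mathcomp Require Import all_boot all_order all_algebra.
From mathcomp Require Import all_classical all_reals all_analysis.
From mathcomp Require Import Rstruct Rstruct_topology.
From mathcomp Require Import lra.

(* By recursion on [k] choose open locally finite covers [omega k] refining
   [lambda k], [omega k.-1] and a cover [network_separator k], together with a
   continuous pseudometric [rho k <= 1] in which [omega k] is open and locally
   finite; [rho k] is built from Urysohn functions of a closed shrinking.
   Enumerating all pairs of levels of a sigma-discrete network, the separating
   covers distinguish points, so [d := sup_k rho k / k.+1] is a metric.  Its
   topology is coarser than that of [X], since at each scale only finitely many
   [rho k] matter, and [omega i] stays open and locally finite for [d] because
   [d >= rho i / i.+1].  The map [psi] is the identity of [X] onto [(X, d)]. *)

Import Order.TTheory GRing.Theory Num.Theory.
Local Open Scope classical_set_scope.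

Section LocallyFinite.
Context {X : topologicalType}.
Implicit Types (S : set (set X)).

Lemma locally_finite_sub S S' :
  S' `<=` S -> locally_finite_family S -> locally_finite_family S'.
Proof.
move=> sub lf x; have [N [Nx fin]] := lf x; exists N; split => //.
by apply: sub_finite_set fin => G [/sub SG GN].
Qed.

Lemma locally_finite_image S (g : set X -> set X) :
  (forall A, S A -> g A `<=` A) ->
  locally_finite_family S -> locally_finite_family [set g A | A in S].
Proof.
move=> gA lf x; have [N [Nx fin]] := lf x; exists N; split => //.
apply: (sub_finite_set _ (finite_image g fin)) => G [[A SA <-]] [y [gAy Ny]].
by exists A => //; split => //; exists y; split => //; apply: gA.
Qed.

Lemma locally_finite_point_finite S x :
  locally_finite_family S -> finite_set [set A | S A /\ A x].
Proof.
move=> lf; have [N [Nx fin]] := lf x; apply: sub_finite_set fin => A [SA Ax].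
by split => //; exists x; split => //; exact: nbhs_singleton.
Qed.

Lemma discrete_locally_finite {S} : discrete_family S -> locally_finite_family S.
Proof.
move=> d x; have [M [Mx hM]] := d x; exists M; split => //.
have [[G0 [SG0 G0M]]|nex] := pselect (exists G, S G /\ G `&` M !=set0).
  by apply: sub_finite_set (finite_set1 G0) => G [SG GM]; exact: hM.
by apply: sub_finite_set (finite_set0 _) => G hG; apply: nex; exists G.
Qed.

Lemma near_all_finite {I : choiceType} {x : X} {D : set I} {P : I -> X -> Prop} :
  finite_set D -> (forall i, D i -> \forall y \near x, P i y) ->
  \forall y \near x, forall i, D i -> P i y.
Proof.
move=> /finite_fsetP[E ->] h.
apply: filterS (@filter_bigI X I E P (nbhs x) _ _) => [y Py i Ei|i Ei].
- exact: Py.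
- exact: h.
Qed.

Lemma not_closureP (B : set X) z : ~ closure B z <-> \forall y \near z, ~ B y.
Proof.
split=> [nBz|nBz /(_ _ nBz) [y [By nBy]] //].
have : nbhs z (~` closure B).
  by apply: open_nbhs_nbhs; split => //; apply: closed_openC; exact: closed_closure.
by apply: filterS => y nBy By; apply: nBy; exact: subset_closure.
Qed.

Lemma not_closure_bigcup S z : locally_finite_family S ->
  (forall B, S B -> ~ closure B z) -> ~ closure (\bigcup_(B in S) B) z.
Proof.
move=> lf nBz; have [N [Nz fin]] := lf z.
have : \forall y \near z, forall B, [set G | S G /\ G `&` N !=set0] B -> ~ B y.
  by apply: near_all_finite fin _ => B [SB _]; apply/not_closureP; exact: nBz.
move=> near_nB; apply/not_closureP; near=> y; case=> B SB By.
have Ny : N y by near: y.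
have : forall B, [set G | S G /\ G `&` N !=set0] B -> ~ B y by near: y.
by move=> /(_ B); apply => //; split => //; exists y.
Unshelve. all: by end_near.
Qed.

End LocallyFinite.

Section Refinements.
Context {T : Type}.
Implicit Types (A B C : set (set T)).

Lemma refines_trans {A B C} : refines A B -> refines B C -> refines A C.
Proof.
move=> AB BC G /AB [H /BC [K CK HK] GH]; exists K => //.
exact: subset_trans GH HK.
Qed.

Lemma refines_meetl A B : refines [set a `&` b | a in A & b in B] A.
Proof. by move=> _ [a Aa [b Bb <-]]; exists a => //; exact: subIsetl. Qed.

Lemma refines_meetr A B : refines [set a `&` b | a in A & b in B] B.
Proof. by move=> _ [a Aa [b Bb <-]]; exists b => //; exact: subIsetr. Qed.

End Refinements.

Section CoverMeet.
Context {X : topologicalType}.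
Implicit Types (A B : set (set X)).

Lemma is_cover_meet A B : is_cover A -> is_cover B ->
  is_cover [set a `&` b | a in A & b in B].
Proof.
move=> covA covB; apply/seteqP; split => // x _.
have [a Aa ax] : (\bigcup_(G in A) G) x by rewrite covA.
have [b Bb bx] : (\bigcup_(G in B) G) x by rewrite covB.
by exists (a `&` b) => //; exists a => //; exists b.
Qed.

Lemma open_family_meet A B : open_family A -> open_family B ->
  open_family [set a `&` b | a in A & b in B].
Proof. by move=> oA oB _ [a Aa [b Bb <-]]; apply: openI; [exact: oA|exact: oB]. Qed.

End CoverMeet.

Local Open Scope ring_scope.
Notation R := Rdefinitions.R.

Definition unit_pseudometric {T : Type} (d : T -> T -> R) :=
  [/\ forall x, d x x = 0, forall x y, d x y = d y x,
      forall x y z, d x z <= d x y + d y z & forall x y, 0 <= d x y <= 1].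

(* The adjoined [0] makes the supremum over an empty family [0]. *)
Definition sup_pseudometric {T I : Type} (S : set I) (g : I -> T -> T -> R) x y : R :=
  sup ([set g i x y | i in S] `|` [set 0]).

Section SupPseudometric.
Context {T I : Type} {S : set I} {g : I -> T -> T -> R}.
Hypothesis g_unit : forall {i}, S i -> unit_pseudometric (g i).

Let g_le1 i x y : S i -> g i x y <= 1.
Proof. by move=> /g_unit [_ _ _ /(_ x y) /andP[]]. Qed.

Let sup_pseudometric_ubound x y : has_ubound ([set g i x y | i in S] `|` [set 0]).
Proof. by exists 1 => r [[j Sj <-]|->]; [exact: g_le1|exact: ler01]. Qed.

Lemma sup_pseudometric_ge i x y : S i -> g i x y <= sup_pseudometric S g x y.
Proof.
by move=> Si; apply: (ub_le_sup (sup_pseudometric_ubound x y)); left; exists i.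
Qed.

Lemma sup_pseudometric_ge0 x y : 0 <= sup_pseudometric S g x y.
Proof. by apply: (ub_le_sup (sup_pseudometric_ubound x y)); right. Qed.

Lemma sup_pseudometric_le x y c :
  0 <= c -> (forall i, S i -> g i x y <= c) -> sup_pseudometric S g x y <= c.
Proof.
move=> c0 gc; apply: ge_sup => [|r [[j Sj <-]|->] //]; first by exists 0; right.
exact: gc.
Qed.

Lemma unit_pseudometric_sup : unit_pseudometric (sup_pseudometric S g).
Proof.
have sym x y : sup_pseudometric S g x y <= sup_pseudometric S g y x.
  apply: sup_pseudometric_le => [|i Si]; first exact: sup_pseudometric_ge0.
  by have [_ -> _ _] := g_unit Si; exact: sup_pseudometric_ge.
split=> [x|x y|x y z|x y].
- apply/eqP; rewrite eq_le sup_pseudometric_ge0 andbT.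
  by apply: sup_pseudometric_le => // i /g_unit [-> _ _ _].
- by apply/eqP; rewrite eq_le !sym.
- apply: sup_pseudometric_le => [|i Si].
    by apply: addr_ge0; exact: sup_pseudometric_ge0.
  have [_ _ tri _] := g_unit Si.
  by apply: le_trans (tri x y z) _; apply: lerD; exact: sup_pseudometric_ge.
- rewrite sup_pseudometric_ge0 /=.
  by apply: sup_pseudometric_le => // i Si; exact: g_le1.
Qed.

End SupPseudometric.

Lemma unit_pseudometric_scale {T : Type} (w : R) (d : T -> T -> R) :
  0 <= w <= 1 -> unit_pseudometric d -> unit_pseudometric (fun x y => w * d x y).
Proof.
move=> /andP[w0 w1] [d0 dsym dtri d01]; split=> [x|x y|x y z|x y].
- by rewrite d0 mulr0.
- by rewrite dsym.
- by rewrite -mulrDr; exact: ler_wpM2l.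
- by have /andP[? ?] := d01 x y; rewrite mulr_ge0 //= mulr_ile1.
Qed.

Lemma unit_pseudometric_dist {T : Type} (f : T -> R) :
  (forall x, 0 <= f x <= 1) -> unit_pseudometric (fun x y => `|f x - f y|).
Proof.
move=> f01; split=> [x|x y|x y z|x y].
- by rewrite subrr normr0.
- exact: distrC.
- exact: ler_distD.
- rewrite normr_ge0 /= ler_norml.
  by have /andP[? ?] := f01 x; have /andP[? ?] := f01 y; apply/andP; split; lra.
Qed.

Section AdaptedPseudometric.
Context {X : topologicalType}.
Implicit Types (d : X -> X -> R) (omega : set (set X)).

Definition pseudometric_continuous d :=
  forall x e, 0 < e -> \forall y \near x, d x y < e.

Definition pseudometric_open d (G : set X) :=
  forall x, G x -> exists2 e, 0 < e & forall y, d x y < e -> G y.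

Definition pseudometric_locally_finite d omega := forall x,
  exists2 e, 0 < e & finite_set [set G | omega G /\ exists y, G y /\ d x y < e].

Definition adapted_pseudometric omega d :=
  [/\ unit_pseudometric d, pseudometric_continuous d,
      (forall G, omega G -> pseudometric_open d G) & pseudometric_locally_finite d omega].

End AdaptedPseudometric.

Section UrysohnPseudometric.
Context {X : topologicalType} (W : set (set X)) (f : set X -> X -> R).
Hypothesis W_lf : locally_finite_family W.
Hypothesis f_cont : forall {A}, W A -> continuous (f A).
Hypothesis f01 : forall {A}, W A -> forall x, 0 <= f A x <= 1.
Hypothesis f_off : forall {A}, W A -> forall x, ~ A x -> f A x = 0.

Definition urysohn_pseudometric : X -> X -> R :=
  sup_pseudometric W (fun A x y => `|f A x - f A y|).

Definition half_superlevel (A : set X) := [set x | 2^-1 < f A x].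

Let dist_unit A : W A -> unit_pseudometric (fun x y => `|f A x - f A y|).
Proof. by move=> WA; apply: unit_pseudometric_dist; exact: f01. Qed.

Lemma urysohn_pseudometric_ge {A} x y :
  W A -> `|f A x - f A y| <= urysohn_pseudometric x y.
Proof. exact: (sup_pseudometric_ge dist_unit). Qed.

Lemma unit_urysohn_pseudometric : unit_pseudometric urysohn_pseudometric.
Proof. exact: (unit_pseudometric_sup dist_unit). Qed.

(* Near [x] only the finitely many [A] meeting a fixed neighbourhood of [x]
   contribute; each of them is continuous at [x], the others vanish. *)
Lemma urysohn_pseudometric_continuous : pseudometric_continuous urysohn_pseudometric.
Proof.
move=> x e e0; have e2 : 0 < e / 2 by rewrite divr_gt0.
have [N [Nx fin]] := W_lf x.
have : \forall y \near x, forall A, [set G | W G /\ G `&` N !=set0] A ->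
    `|f A x - f A y| < e / 2.
  apply: near_all_finite fin _ => A [WA _].
  have near_fx : nbhs (f A x) [set r : R | `|f A x - r| < e / 2].
    by apply/nbhs_ballP; exists (e / 2).
  exact: (f_cont WA x _ near_fx).
move=> near_small; near=> y.
apply: le_lt_trans (_ : e / 2 < e); last by lra.
apply: sup_pseudometric_le => [|A WA]; first exact: ltW.
have [AN|nAN] := pselect (A `&` N !=set0).
  have : forall A, [set G | W G /\ G `&` N !=set0] A -> `|f A x - f A y| < e / 2.
    by near: y.
  by move=> /(_ A (conj WA AN)) /ltW.
have Ny : N y by near: y.
rewrite !(f_off WA) ?subrr ?normr0 ?(ltW e2) // => [Ay|Ax]; apply: nAN.
  by exists y.
by exists x; split => //; exact: nbhs_singleton.
Unshelve. all: by end_near.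
Qed.

Lemma half_superlevel_sub A : W A -> half_superlevel A `<=` A.
Proof.
move=> WA y; rewrite /half_superlevel /= => fy; apply: contrapT => nAy.
by move: fy; rewrite (f_off WA) // ltNge invr_ge0 ler0n.
Qed.

Lemma half_superlevel_open A : W A -> open (half_superlevel A).
Proof.
move=> WA; have -> : half_superlevel A = f A @^-1` [set r | r > 2^-1] by [].
by apply: open_comp; [move=> x _; exact: f_cont | exact: open_gt].
Qed.

Lemma urysohn_pseudometric_open A :
  W A -> pseudometric_open urysohn_pseudometric (half_superlevel A).
Proof.
move=> WA x; rewrite /half_superlevel /= => fx.
exists (f A x - 2^-1); first by rewrite subr_gt0.
move=> y /(le_lt_trans (urysohn_pseudometric_ge x y WA)).
by rewrite ltr_norml => /andP[_ ?] /=; lra.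
Qed.

(* Points at distance [< 1/4] from [x] lie in [half_superlevel A] only if
   [f A x > 1/4 > 0], hence only for the finitely many [A] containing [x]. *)
Lemma urysohn_pseudometric_locally_finite :
  pseudometric_locally_finite urysohn_pseudometric [set half_superlevel A | A in W].
Proof.
move=> x; exists 4^-1 => //.
apply: (sub_finite_set _ (finite_image half_superlevel
  (locally_finite_point_finite W x W_lf))).
move=> _ [[A WA <-]] [y [fy dxy]]; exists A => //; split => //.
apply: contrapT => nAx; move: (le_lt_trans (urysohn_pseudometric_ge x y WA) dxy).
by move: fy; rewrite /half_superlevel /= ltr_norml (f_off WA x) // => ? /andP[? _]; lra.
Qed.

End UrysohnPseudometric.

Section Paracompact.
Context {X : topologicalType}.
Hypotheses (reg : regular_space X) (para : paracompact X).
Implicit Types (alpha : set (set X)).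

Lemma paracompact_closure_refinement {alpha} : is_cover alpha -> open_family alpha ->
  exists2 beta : set (set X), open_lf_cover beta &
    forall B, beta B -> exists2 A, alpha A & closure B `<=` A.
Proof.
move=> cov op.
pose gam := [set V : set X | open V /\ exists2 A, alpha A & closure V `<=` A].
have [beta beta_cover beta_gam] : exists2 beta, open_lf_cover beta & refines beta gam.
  apply: para => [|V []//]; apply/seteqP; split => // x _.
  have [A alphaA Ax] : (\bigcup_(G in alpha) G) x by rewrite cov.
  have [V Vx clVA] := reg x A (open_nbhs_nbhs (conj (op A alphaA) Ax)).
  exists V° => //; split; first exact: open_interior.
  by exists A => //; apply: subset_trans clVA; apply: closureS; exact: interior_subset.
exists beta => // B /beta_gam [V [_ [A alphaA clVA]] BV]; exists A => //.
exact: subset_trans (closureS BV) clVA.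
Qed.

Lemma paracompact_normal : normal_space X.
Proof.
apply/(@normal_openP Rdefinitions.R) => K E clK clE; rewrite setIC => EK0.
have KE_cover : is_cover ([set ~` E] `|` [set ~` K]).
  apply/seteqP; split => // x _; have [Ex|nEx] := pselect (E x).
    by exists (~` K); [right|move=> Kx; have : (E `&` K) x by []; rewrite EK0].
  by exists (~` E); [left|].
have KE_open : open_family ([set ~` E] `|` [set ~` K]).
  by move=> G [->|->]; apply: closed_openC.
have [beta [beta_cov beta_op beta_lf] beta_ref] :=
  paracompact_closure_refinement KE_cover KE_open.
pose U := \bigcup_(B in [set B | beta B /\ B `&` K !=set0]) B.
have nclU : forall e, E e -> ~ closure U e.
  move=> e Ee; apply: not_closure_bigcup => [|B [betaB [k [Bk Kk]]] clBe].
    by apply: locally_finite_sub beta_lf => B [].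
  have [A [->|->] clBA] := beta_ref B betaB; first exact: clBA _ clBe Ee.
  exact: clBA k (subset_closure Bk) Kk.
exists U, (~` closure U); split.
- by apply: bigcup_open => B [betaB _]; exact: beta_op.
- by apply: closed_openC; exact: closed_closure.
- move=> k Kk; have [B betaB Bk] : (\bigcup_(G in beta) G) k by rewrite beta_cov.
  by exists B => //; split => //; exists k.
- exact: nclU.
- by apply/seteqP; split => // y [Uy]; apply; exact: subset_closure.
Qed.

Lemma paracompact_closed_shrinking {alpha} : is_cover alpha -> open_family alpha ->
  exists F : set X -> set X, (forall A, closed (F A) /\ F A `<=` A) /\
     forall x, exists2 A, alpha A & F A x.
Proof.
move=> cov op.
have [beta [beta_cov _ beta_lf] beta_ref] := paracompact_closure_refinement cov op.
exists (fun A => closure (\bigcup_(B in [set B | beta B /\ closure B `<=` A]) B)).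
split=> [A|x].
  split; first exact: closed_closure.
  move=> z clz; apply: contrapT => nAz; move: clz; apply: not_closure_bigcup.
    by apply: locally_finite_sub beta_lf => B [].
  by move=> B [_ clBA] /clBA.
have [B betaB Bx] : (\bigcup_(G in beta) G) x by rewrite beta_cov.
have [A alphaA clBA] := beta_ref B betaB; exists A => //.
by apply: subset_closure; exists B.
Qed.

Lemma urysohn_family {W : set (set X)} : is_cover W -> open_family W ->
  exists f : set X -> X -> R,
    [/\ forall A, W A -> continuous (f A),
        forall A, W A -> forall x, 0 <= f A x <= 1,
        forall A, W A -> forall x, ~ A x -> f A x = 0 &
        forall x, exists2 A, W A & f A x = 1].
Proof.
move=> cov op; have [F [F_closed F_cov]] := paracompact_closed_shrinking cov op.
have urysohn A : exists f : X -> R, W A -> [/\ continuous f,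
    forall x, 0 <= f x <= 1, forall x, ~ A x -> f x = 0 & forall x, F A x -> f x = 1].
  have [WA|nWA] := pselect (W A); last by exists (fun=> 0).
  have [clF FA] := F_closed A.
  have : uniform_separator (~` A) (F A).
    apply: (proj1 (@normal_separatorP R X) paracompact_normal) => //.
      by apply: open_closedC; exact: op.
    by apply/seteqP; split => // y [nAy Fy]; exact: nAy (FA _ Fy).
  move/(@uniform_separatorP X R) => [f [f_cont f01 f0 f1]]; exists f => _.
  split=> // x; first by have : `[0, 1]%classic (f x) by apply: f01; exists x.
    by move=> nAx; apply: f0; exists x.
  by move=> Fx; apply: f1; exists x.
have [f f_prop] := choice urysohn; exists f.
split=> [A /f_prop[]//|A /f_prop[]//|A /f_prop[]//|x].
have [A WA FAx] := F_cov x; exists A => //.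
by have [_ _ _ ->] := f_prop A WA.
Qed.

Lemma adapted_refinement {W : set (set X)} : is_cover W -> open_family W ->
  exists (omega : set (set X)) (d : X -> X -> R),
    [/\ open_lf_cover omega, refines omega W & adapted_pseudometric omega d].
Proof.
move=> cov op; have [V [V_cov V_op V_lf] VW] := para W cov op.
have [f [f_cont f01 f_off f1]] := urysohn_family V_cov V_op.
exists [set half_superlevel f A | A in V], (urysohn_pseudometric V f); split.
- split.
  + apply/seteqP; split => // x _; have [A VA fx] := f1 x.
    by exists (half_superlevel f A); [exists A|rewrite /half_superlevel /= fx; lra].
  + by move=> _ [A VA <-]; exact: (half_superlevel_open _ _ f_cont).
  + exact: locally_finite_image (half_superlevel_sub _ _ f_off) V_lf.
- apply: (refines_trans _ VW) => _ [A VA <-]; exists A => //.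
  exact: (half_superlevel_sub _ _ f_off).
- split.
  + exact: (unit_urysohn_pseudometric _ _ f01).
  + exact: (urysohn_pseudometric_continuous _ _ V_lf f_cont f_off).
  + by move=> _ [A VA <-]; exact: (urysohn_pseudometric_open _ _ f01).
  + exact: (urysohn_pseudometric_locally_finite _ _ V_lf f01 f_off).
Qed.

End Paracompact.

Section NetworkSeparation.
Context {X : topologicalType}.
Implicit Types (N : set (set X)).

Definition separating_cover N1 N2 : set (set X) :=
  [set ~` closure (\bigcup_(F in N1) F)] `|`
  [set ~` closure (\bigcup_(F' in [set F' | N1 F' /\ F' <> F]) F') `&`
       ~` closure (\bigcup_(F' in [set F' | N2 F' /\ closure F' `&` closure F = set0]) F')
   | F in N1].

Lemma separating_cover_open N1 N2 : open_family (separating_cover N1 N2).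
Proof.
move=> G [->|[F _ <-]]; first by apply: closed_openC; exact: closed_closure.
by apply: openI; apply: closed_openC; exact: closed_closure.
Qed.

Lemma separating_cover_cover N1 N2 : discrete_family N1 -> discrete_family N2 ->
  is_cover (separating_cover N1 N2).
Proof.
move=> N1_disc N2_disc; apply/seteqP; split => // z _.
have [clz|nclz] := pselect (closure (\bigcup_(F in N1) F) z); last first.
  by exists (~` closure (\bigcup_(F in N1) F)) => //; left.
have [F N1F clFz] : exists2 F, N1 F & closure F z.
  apply: contrapT => nF; move: clz.
  apply: (not_closure_bigcup _ _ (discrete_locally_finite N1_disc)) => F N1F clFz.
  by apply: nF; exists F.
exists (~` closure (\bigcup_(F' in [set F' | N1 F' /\ F' <> F]) F') `&`
    ~` closure (\bigcup_(F' in [set F' | N2 F' /\ closure F' `&` closure F = set0]) F')).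
  by right; exists F.
split.
- apply: not_closure_bigcup => [|F' [N1F' neqF] clF'z].
    by apply: locally_finite_sub (discrete_locally_finite N1_disc) => G [].
  have [M [Mz M1]] := N1_disc z.
  by apply: neqF; apply: M1 => //; [exact: clF'z | exact: clFz].
- apply: not_closure_bigcup => [|F' [_ disj] clF'z].
    by apply: locally_finite_sub (discrete_locally_finite N2_disc) => G [].
  by have : (closure F' `&` closure F) z by []; rewrite disj.
Qed.

Lemma separating_cover_separates N1 N2 F F' x y :
  N1 F -> F x -> N2 F' -> F' y -> closure F' `&` closure F = set0 ->
  forall G, separating_cover N1 N2 G -> G x -> ~ G y.
Proof.
move=> N1F Fx N2F' F'y disj G [->|[F0 N1F0 <-]].
  by move=> nx; exfalso; apply: nx; apply: subset_closure; exists F.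
move=> [nx1 nx2] [_ ny2]; have [eqF|neqF] := pselect (F0 = F).
  by subst F0; apply: ny2; apply: subset_closure; exists F'.
by apply: nx1; apply: subset_closure; exists F => //; split => // /esym.
Qed.

Lemma network_separation (mu : nat -> set (set X)) :
  regular_space X -> accessible_space X -> network (\bigcup_n mu n) ->
  forall x y, x <> y -> exists n m F F',
    [/\ mu n F, F x, mu m F', F' y & closure F' `&` closure F = set0].
Proof.
move=> reg acc net x y /eqP xy; have [A [oA xA yA]] := acc x y xy.
move: xA yA; rewrite !inE => xA yA.
have [V Vx clVA] := reg x A (open_nbhs_nbhs (conj oA xA)).
have nclV : nbhs y (~` closure V).
  apply: open_nbhs_nbhs; split; first by apply: closed_openC; exact: closed_closure.
  by move=> /clVA.
have [V' V'y clV'] := reg y _ nclV.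
have [F [n _ muF] [Fx FV]] := net x _ (@open_interior _ V) Vx.
have [F' [m _ muF'] [F'y F'V]] := net y _ (@open_interior _ V') V'y.
exists n, m, F, F'; split => //; apply/seteqP; split => // z [clF'z clFz].
have : closure V z by apply: (closureS (subset_trans FV (@interior_subset _ V))).
by apply: clV'; apply: (closureS (subset_trans F'V (@interior_subset _ V'))).
Qed.

End NetworkSeparation.

Record metric_fun (T : choiceType) := MetricFun {
  mdist_fun : T -> T -> R;
  mdist_fun_refl : forall x, mdist_fun x x = 0;
  mdist_fun_eq0 : forall x y, mdist_fun x y = 0 -> x = y;
  mdist_fun_sym : forall x y, mdist_fun x y = mdist_fun y x;
  mdist_fun_triangle : forall y x z, mdist_fun x z <= mdist_fun x y + mdist_fun y z }.
Arguments mdist_fun {T}.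

Definition metric_of {T : choiceType} (m : metric_fun T) : Type := T.

Section MetricOf.
Context {T : choiceType} (m : metric_fun T).

HB.instance Definition _ := Choice.on (metric_of m).
HB.instance Definition _ := @isMetric.Build R (metric_of m) (mdist_fun m)
  (@mdist_fun_refl _ m) (@mdist_fun_eq0 _ m) (@mdist_fun_sym _ m)
  (@mdist_fun_triangle _ m).

Lemma metric_of_nbhsP (z : metric_of m) (P : set (metric_of m)) :
  nbhs z P <-> exists2 e, 0 < e & [set y | mdist_fun m z y < e] `<=` P.
Proof.
by rewrite nbhs_ballP; split=> -[e e0 zeP]; exists e => //; rewrite -ballEmdist in zeP *.
Qed.

End MetricOf.

Definition unit_pseudometric_metric {T : choiceType} {d : T -> T -> R}
    (d_unit : unit_pseudometric d) (d_sep : forall x y, d x y = 0 -> x = y) :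
    metric_fun T :=
  @MetricFun T d (fun x => let: And4 d0 _ _ _ := d_unit in d0 x) d_sep
    (fun x y => let: And4 _ dsym _ _ := d_unit in dsym x y)
    (fun y x z => let: And4 _ _ dtri _ := d_unit in dtri x y z).

Section MetricOfPseudometric.
Context {X : topologicalType} (m : metric_fun X).

Lemma continuous_metric_of :
  pseudometric_continuous (mdist_fun m) -> continuous (fun x : X => x : metric_of m).
Proof.
by move=> m_cont x P /metric_of_nbhsP [e e0 eP]; apply: filterS (m_cont x e e0).
Qed.

Lemma open_lf_cover_metric_of (omega : set (set X)) : is_cover omega ->
  (forall G, omega G -> pseudometric_open (mdist_fun m) G) ->
  pseudometric_locally_finite (mdist_fun m) omega ->
  open_lf_cover (T := metric_of m) omega.
Proof.
move=> cov op lf; split=> // [G omegaG|x].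
  rewrite openE => x Gx; apply/metric_of_nbhsP.
  by have [e e0 eG] := op G omegaG x Gx; exists e.
have [e e0 fin] := lf x; exists [set y : metric_of m | mdist_fun m x y < e].
by split=> //; apply/metric_of_nbhsP; exists e.
Qed.

End MetricOfPseudometric.

Definition weight (k : nat) : R := k.+1%:R^-1.

Lemma weight_gt0 k : 0 < weight k.
Proof. by rewrite invr_gt0 ltr0n. Qed.

Lemma weight_le1 k : weight k <= 1.
Proof. by rewrite invf_le1 ?ler1n ?ltr0n. Qed.

Lemma weight_le k K : (K <= k)%N -> weight k <= weight K.
Proof. by move=> Kk; rewrite lef_pV2 ?posrE ?ltr0n // ler_nat. Qed.

Section WeightedSup.
Context {X : topologicalType} (omega : nat -> set (set X)) (rho : nat -> X -> X -> R).
Hypothesis rho_adapted : forall k, adapted_pseudometric (omega k) (rho k).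

Definition weighted_sup : X -> X -> R :=
  sup_pseudometric setT (fun k x y => weight k * rho k x y).

Let rho_unit k : unit_pseudometric (rho k).
Proof. by have [] := rho_adapted k. Qed.

Let weighted_unit k : setT k -> unit_pseudometric (fun x y => weight k * rho k x y).
Proof.
by move=> _; apply: unit_pseudometric_scale => //; rewrite ltW ?weight_gt0 ?weight_le1.
Qed.

Lemma weighted_sup_ge k x y : weight k * rho k x y <= weighted_sup x y.
Proof. exact: (sup_pseudometric_ge weighted_unit). Qed.

Lemma unit_weighted_sup : unit_pseudometric weighted_sup.
Proof. exact: (unit_pseudometric_sup weighted_unit). Qed.

Lemma weighted_sup_lt k x y e : weighted_sup x y < weight k * e -> rho k x y < e.
Proof.
by move=> /(le_lt_trans (weighted_sup_ge k x y)); rewrite ltr_pM2l ?weight_gt0.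
Qed.

Lemma weighted_sup_open {k G} : omega k G -> pseudometric_open weighted_sup G.
Proof.
move=> omegaG x Gx; have [_ _ rho_open _] := rho_adapted k.
have [e e0 eG] := rho_open G omegaG x Gx.
exists (weight k * e); first by rewrite mulr_gt0 ?weight_gt0.
by move=> y /weighted_sup_lt; exact: eG.
Qed.

Lemma weighted_sup_locally_finite k : pseudometric_locally_finite weighted_sup (omega k).
Proof.
move=> x; have [_ _ _ /(_ x) [e e0 fin]] := rho_adapted k.
exists (weight k * e); first by rewrite mulr_gt0 ?weight_gt0.
apply: sub_finite_set fin => G [omegaG [y [Gy /weighted_sup_lt rho_xy]]].
by split=> //; exists y.
Qed.

(* The terms with [k >= K] are below [weight K], the finitely many others are
   small near [x] by continuity of each [rho k]. *)
Lemma weighted_sup_continuous : pseudometric_continuous weighted_sup.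
Proof.
move=> x e e0; have e2 : 0 < e / 2 by rewrite divr_gt0.
have [K] := ltr_add_invr e2; rewrite add0r -/(weight K) => weightK.
have : \forall y \near x, forall k, `I_K k -> rho k x y < e / 2.
  apply: near_all_finite (finite_II K) _ => k _.
  by have [_ rho_cont _ _] := rho_adapted k; exact: rho_cont.
move=> near_small; near=> y.
apply: le_lt_trans (_ : e / 2 < e); last by lra.
apply: sup_pseudometric_le => [|k _]; first exact: ltW.
have [_ _ _ /(_ x y) /andP[rho0 rho1]] := rho_unit k.
have [kK|Kk] := ltnP k K.
  have : forall k, `I_K k -> rho k x y < e / 2 by near: y.
  move=> /(_ k kK) /ltW; apply: le_trans.
  by rewrite ler_piMl ?weight_le1.
apply: (le_trans _ (ltW weightK)); apply: (@le_trans _ _ (weight k)).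
  by rewrite ler_piMr // ltW ?weight_gt0.
exact: weight_le.
Unshelve. all: by end_near.
Qed.

Hypothesis omega_separates :
  forall x y, x <> y -> exists k, exists2 G, omega k G & G x /\ ~ G y.

Lemma weighted_sup_eq0 x y : weighted_sup x y = 0 -> x = y.
Proof.
move=> dxy0; apply: contrapT => /omega_separates [k [G omegaG [Gx nGy]]].
have [e e0 eG] := weighted_sup_open omegaG x Gx.
by apply/nGy/eG; rewrite dxy0.
Qed.

Definition weighted_sup_metric : metric_fun X :=
  unit_pseudometric_metric unit_weighted_sup weighted_sup_eq0.

End WeightedSup.

Lemma recursive_choice {A : Type} (Q : A -> Prop) (P : nat -> A -> A -> Prop) (a0 : A) :
  Q a0 -> (forall k a, Q a -> exists2 b, Q b & P k a b) ->
  exists u : nat -> A, forall k, P k (if k is k'.+1 then u k' else a0) (u k).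
Proof.
move=> Qa0 step.
have [f f_step] : {f : nat * A -> A &
    forall ka, Q ka.2 -> Q (f ka) /\ P ka.1 ka.2 (f ka)}.
  apply: (@choice _ _ (fun ka b => Q ka.2 -> Q b /\ P ka.1 ka.2 b)) => -[k a].
  have [Qa|nQa] := pselect (Q a); last by exists a.
  by have [b Qb Pb] := step k a Qa; exists b.
pose u := fix u k := f (k, if k is k'.+1 then u k' else a0).
have uE k : u k = f (k, if k is k'.+1 then u k' else a0) by case: k.
have Q_prev k : Q (if k is k'.+1 then u k' else a0).
  by elim: k => [//|k IH]; rewrite uE; exact: (f_step (k, _) IH).1.
by exists u => k; rewrite uE; exact: (f_step (k, _) (Q_prev k)).2.
Qed.

Section Construction.
Context {X : topologicalType} (lambda mu : nat -> set (set X)).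

Definition network_separator (k : nat) : set (set X) :=
  let: (n, m) := odflt (0, 0)%N (unpickle k) in separating_cover (mu n) (mu m).

Definition admissible_step k (prev : set (set X)) (p : set (set X) * (X -> X -> R)) :=
  [/\ open_lf_cover p.1, refines p.1 (lambda k), refines p.1 prev,
      refines p.1 (network_separator k) & adapted_pseudometric p.1 p.2].

Hypotheses (reg : regular_space X) (para : paracompact X).
Hypothesis mu_discrete : forall n, discrete_family (mu n).
Hypothesis lambda_cover : forall i, open_lf_cover (lambda i).

Lemma network_separator_cover k : is_cover (network_separator k).
Proof.
rewrite /network_separator; case: (odflt _ _) => n m.
exact: separating_cover_cover.
Qed.

Lemma network_separator_open k : open_family (network_separator k).
Proof.
by rewrite /network_separator; case: (odflt _ _) => n m; exact: separating_cover_open.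
Qed.

Lemma admissible_step_exists k {prev} : is_cover prev -> open_family prev ->
  exists p, admissible_step k prev p.
Proof.
move=> prev_cov prev_op; have [lambda_cov lambda_op _] := lambda_cover k.
pose M := [set a `&` b | a in [set a `&` b | a in lambda k & b in prev]
                       & b in network_separator k].
have [||omega [d [omega_cover omega_M d_adapted]]] :=
  adapted_refinement reg para (W := M).
- apply: is_cover_meet (network_separator_cover k).
  exact: is_cover_meet.
- apply: open_family_meet (network_separator_open k).
  exact: open_family_meet.
exists (omega, d); split=> //=.
- exact: refines_trans omega_M (refines_trans (refines_meetl _ _) (refines_meetl _ _)).
- exact: refines_trans omega_M (refines_trans (refines_meetl _ _) (refines_meetr _ _)).
- exact: refines_trans omega_M (refines_meetr _ _).
Qed.

Lemma admissible_sequence : exists u : nat -> set (set X) * (X -> X -> R),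
  forall k, admissible_step k (if k is k'.+1 then (u k').1 else [set setT]) (u k).
Proof.
pose Q (p : set (set X) * (X -> X -> R)) := is_cover p.1 /\ open_family p.1.
have [|k p [p_cov p_op]|u u_adm] :=
  recursive_choice Q (fun k p q => admissible_step k p.1 q) ([set setT], fun _ _ => 0).
- by split=> [|G ->]; [apply/seteqP; split => // x _; exists setT|exact: openT].
- have [q q_adm] := admissible_step_exists k p_cov p_op.
  by exists q => //; have [[]] := q_adm.
- by exists u => -[|k]; exact: u_adm.
Qed.

Lemma network_separator_separates (omega : nat -> set (set X)) :
  accessible_space X -> network (\bigcup_n mu n) ->
  (forall k, is_cover (omega k)) -> (forall k, refines (omega k) (network_separator k)) ->
  forall x y, x <> y -> exists k, exists2 G, omega k G & G x /\ ~ G y.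
Proof.
move=> acc net omega_cov omega_ref x y /(network_separation mu reg acc net).
move=> [n [m [F [F' [muF Fx muF' F'y disj]]]]]; exists (pickle (n, m)).
have [G omegaG Gx] : (\bigcup_(G in omega (pickle (n, m))) G) x by rewrite omega_cov.
exists G => //; split=> // Gy; have [D] := omega_ref _ G omegaG.
rewrite /network_separator pickleK /= => sepD GD.
exact: separating_cover_separates muF Fx muF' F'y disj D sepD (GD x Gx) (GD y Gy).
Qed.

End Construction.

Local Close Scope ring_scope.

Theorem mainTheorem9 (X : topologicalType) (lambda : nat -> set (set X)) :
  sigma_space X -> paracompact X ->
  (forall i, open_lf_cover (lambda i)) ->
  (forall i, refines (lambda i.+1) (lambda i)) ->
  exists (omega : nat -> set (set X)) (Z : metricType Rdefinitions.R) (psi : X -> Z),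
    [/\ (forall i, open_lf_cover (omega i)),
        (forall i, refines (omega i) (lambda i)),
        (forall i, refines (omega i.+1) (omega i)) &
        [/\ continuous psi, bijective psi &
           (forall i, open_lf_cover [set psi @` G | G in omega i])]].
Proof.
move=> [reg acc [mu [mu_disc mu_net]]] para lambda_cover _.
have [u u_adm] := admissible_sequence lambda mu reg para mu_disc lambda_cover.
pose omega k := (u k).1; pose rho k := (u k).2.
have omega_cover k : open_lf_cover (omega k) by have [] := u_adm k.
have rho_adapted k : adapted_pseudometric (omega k) (rho k) by have [] := u_adm k.
have omega_sep : forall x y, x <> y -> exists k, exists2 G, omega k G & G x /\ ~ G y.
  apply: (network_separator_separates mu reg omega acc mu_net) => k.
    by have [[]] := u_adm k.
  by have [] := u_adm k.
pose m := weighted_sup_metric _ _ rho_adapted omega_sep.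
exists omega, (metric_of m), (fun x => x); split=> [i|i|i|]; first exact: omega_cover.
- by have [] := u_adm i.
- by have [] := u_adm i.+1.
split=> [||i].
- exact: (continuous_metric_of m (weighted_sup_continuous _ _ rho_adapted)).
- by exists (fun x => x).
have -> : [set (fun x => x) @` G | G in omega i] = omega i :> set (set (metric_of m)).
  apply/seteqP; split=> [_ [G ? <-]|G ?]; first by rewrite image_id.
  by exists G; rewrite ?image_id.
have [omega_cov _ _] := omega_cover i.
apply: (open_lf_cover_metric_of m _ omega_cov).
- by move=> G; exact: (weighted_sup_open _ _ rho_adapted).
- exact: (weighted_sup_locally_finite _ _ rho_adapted).
Qed.
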